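(* Let $k \geq 5$ be an integer. If $c$ is a rational number such that $\mathcal{G}[\{C_k\}, c]$ is finite and $\mathcal{G}(\{C_k\}, c)^*$ is infinite (that is, $c = c(C_k)$ exists), then \[c \geq \frac{2}{2k+1}.\]
   Context: Graphs are finite and simple; $C_k$ is the cycle on $k$ vertices. For $D \subseteq V(G)$, $N[D]$ is the union of closed neighbourhoods of vertices of $D$. For a set $\mathcal{F}$ of graphs, $D$ is $\mathcal{F}$-isolating if $G - N[D]$ contains no subgraph isomorphic to a member of $\mathcal{F}$, and $\iota(G,\mathcal{F})$ is the minimum size of such a set. Let $\mathcal{G}$ be the set of connected graphs $G$ with $V(G) = [n]$ for some $n \geq 1$. For real $\alpha > 0$, $\mathcal{G}(\mathcal{F},\alpha) = \{G \in \mathcal{G} : \iota(G,\mathcal{F}) \le \lfloor \alpha|V(G)| \rfloor\}$, $\mathcal{G}(\mathcal{F},\alpha)^* = \{G \in \mathcal{G}(\mathcal{F},\alpha) : \iota(G,\mathcal{F}) = \lfloor \alpha |V(G)|\rfloor\}$, and $\mathcal{G}[\mathcal{F},\alpha] = \mathcal{G} \setminus \mathcal{G}(\mathcal{F},\alpha)$. The number $c(\mathcal{F})$, when it exists, is a rational number such that $\mathcal{G}[\mathcal{F},c(\mathcal{F})]$ is finite and $\mathcal{G}(\mathcal{F},c(\mathcal{F}))^*$ is infinite. *)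

From mathcomp Require Import all_boot all_order all_algebra.
Unset Strict Implicit. Unset Printing Implicit Defensive.
Import Order.TTheory GRing.Theory Num.Theory.

(* A labelled graph on the vertex set 'I_n (standing for [n] = {1,..,n},
   vertex i+1 is coded by i), given by its set of ordered adjacent pairs. *)
Definition graph := {n : nat & {set 'I_n * 'I_n}}.
Definition nverts (G : graph) : nat := tag G.
Definition edges (G : graph) : {set 'I_(nverts G) * 'I_(nverts G)} := tagged G.
Definition adj (G : graph) : rel 'I_(nverts G) := fun x y => (x, y) \in edges G.

Definition simple (G : graph) : Prop :=
  forall x y : 'I_(nverts G), adj G x y = adj G y x /\ ~~ adj G x x.
Definition connected (G : graph) : Prop :=
  forall x y : 'I_(nverts G), connect (adj G) x y.

Definition in_calG (G : graph) : Prop :=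
  (0 < nverts G)%N /\ simple G /\ connected G.

Definition closed_nbhd (G : graph) (D : {set 'I_(nverts G)}) : {set 'I_(nverts G)} :=
  [set v | (v \in D) || [exists u in D, adj G u v]].

(* G - X contains a subgraph isomorphic to C_k (k >= 3): an injective map
   f : Z_k -> V(G) \ X with f i ~ f (i+1 mod k) *)
Definition has_Ck_outside (G : graph) (k : nat) (X : {set 'I_(nverts G)}) : bool :=
  [exists f : {ffun 'I_k -> 'I_(nverts G)},
     injectiveb f && [forall i : 'I_k, (f i \notin X) && adj G (f i) (f (ordS i))]].

Definition Ck_isolating (G : graph) (k : nat) (D : {set 'I_(nverts G)}) : bool :=
  ~~ has_Ck_outside G k (closed_nbhd G D).

(* iota(G, {C_k}): minimum size of a {C_k}-isolating set
   (V(G) itself is always isolating, so the default n is never smaller) *)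
Definition iota_Ck (G : graph) (k : nat) : nat :=
  \big[minn/nverts G]_(D : {set 'I_(nverts G)} | Ck_isolating G k D) #|D|.

Definition floor_an (a : rat) (G : graph) : int :=
  Num.floor (a * (nverts G)%:R).

Definition calG_le (k : nat) (a : rat) (G : graph) : Prop :=
  in_calG G /\ (Posz (iota_Ck G k) <= floor_an a G)%R.
Definition calG_star (k : nat) (a : rat) (G : graph) : Prop :=
  calG_le k a G /\ Posz (iota_Ck G k) = floor_an a G.
(* \mathcal{G}[{C_k}, a] = \mathcal{G} \ \mathcal{G}({C_k}, a) *)
Definition calG_gt (k : nat) (a : rat) (G : graph) : Prop :=
  in_calG G /\ ~ calG_le k a G.

Definition finite_graphs (P : graph -> Prop) : Prop :=
  exists s : seq graph, forall G, P G -> G \in s.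

From mathcomp Require Import all_boot all_order all_algebra.
From mathcomp Require Import zify lra.
Import Order.TTheory GRing.Theory Num.Theory.

(* Hang m copies of a gadget, the square of the cycle C_2k with a pendant
   vertex, on a common hub through their pendant vertices.  If a set D meets a
   gadget in at most one vertex, then inside that gadget N[D] is covered by a
   closed neighbourhood N[v] of C_2k^2, and for k >= 5 the k positions
   v + 3, ..., v + k + 2 avoid N[v] and carry a copy of C_k (a Hamiltonian
   cycle of the square of a path).  Hence iota >= 2m on a graph with
   (2k + 1) m + 1 vertices, and if c < 2 / (2k + 1) all these graphs lie in
   G[{C_k}, c] once m is large. *)

Lemma affine_lt_eventually (R : archiFieldType) (a b c : R) :
  (0 <= c)%R -> (c * b < a)%R ->
  exists N, forall m, N <= m -> (c * (m%:R * b + 1) < m%:R * a)%R.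
Proof.
move=> c_ge0 lt_cba; set d := (a - c * b)%R.
have d_gt0 : (0 < d)%R by rewrite subr_gt0.
have := archi_boundP (divr_ge0 c_ge0 (ltW d_gt0)).
set N := Num.Def.archi_bound _; rewrite ltr_pdivrMr // => lt_cNd.
exists N => m le_Nm; have : (N%:R <= m%:R :> R)%R by rewrite ler_nat.
rewrite /d in lt_cNd; nra.
Qed.

Lemma sum_eqn_ord a m : \sum_(u < m) (a == u :> nat) = (a < m).
Proof.
by elim: m => [|m IHm]; rewrite ?big_ord0 // big_ord_recr /= IHm ltnS; case: ltngtP.
Qed.

Lemma sum_card_fibres_le (T : finType) (D : {set T}) (P : pred T) (f : T -> nat) m :
  \sum_(u < m) #|[set x in D | P x && (f x == u)]| <= #|D|.
Proof.
have cardE u : #|[set x in D | P x && (f x == u)]| = \sum_(x in D) (P x && (f x == u)).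
  rewrite -sum1_card big_mkcond [RHS]big_mkcond /=; apply: eq_bigr => x _.
  by rewrite inE; case: (x \in D) => //=; case: (_ && _).
under eq_bigr do rewrite cardE.
rewrite exchange_big -sum1_card; apply: leq_sum => x _.
by case: (P x); rewrite ?sum_eqn_ord ?big1 //=; case: ltnP.
Qed.

Lemma eqn_modDl_small M v a b :
  a < M -> b < M -> ((v + a) %% M == (v + b) %% M) = (a == b).
Proof. by move=> aM bM; rewrite eqn_modDl !modn_small. Qed.

Lemma finite_graphs_bounded (P : graph -> Prop) :
  finite_graphs P -> exists M, forall G, P G -> nverts G <= M.
Proof.
by move=> [s Ps]; exists (\max_(G <- s) nverts G) => G /Ps Gs; apply: leq_bigmax_seq.
Qed.

Lemma iota_Ck_ge (G : graph) k b :
  b <= nverts G -> (forall D, Ck_isolating G k D -> b <= #|D|) -> b <= iota_Ck G k.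
Proof.
move=> le_bn le_bD; apply: (big_ind (fun x => b <= x)) => // x y.
by rewrite leq_min => -> ->.
Qed.

Lemma calG_gt_of_lt k (c : rat) (G : graph) :
  in_calG G -> (c * (nverts G)%:R < (iota_Ck G k)%:R)%R -> calG_gt k c G.
Proof.
move=> GG lt_iota; split=> // -[_ le_floor]; move: lt_iota; apply/negP; rewrite -leNgt.
by apply: le_trans (floor_le _); rewrite [leLHS]pmulrn ler_int.
Qed.

Definition sqcycle_adj (M p q : nat) : bool :=
  [|| q == (p + 1) %% M, q == (p + 2) %% M, p == (q + 1) %% M | p == (q + 2) %% M].

Definition sqcycle_cnbhd (M v p : nat) : bool := (p == v) || sqcycle_adj M v p.

Lemma sqcycle_adj_sym M p q : sqcycle_adj M p q = sqcycle_adj M q p.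
Proof. by rewrite /sqcycle_adj; apply/idP/idP; case/or4P=> ->; rewrite ?orbT. Qed.

Lemma sqcycle_adj_irr M p : 2 < M -> p < M -> ~~ sqcycle_adj M p p.
Proof.
move=> M_gt2 pM; have nshift a : 0 < a < M -> (p == (p + a) %% M) = false.
  by move=> a_bd; rewrite -{1}(modn_small pM) -{1}(addn0 p) eqn_modDl_small //; lia.
by rewrite /sqcycle_adj !nshift //; lia.
Qed.

Lemma sqcycle_adj_shift M b c c' :
  [|| c' == c + 1, c' == c + 2, c == c' + 1 | c == c' + 2] ->
  sqcycle_adj M ((b + c) %% M) ((b + c') %% M).
Proof.
by rewrite /sqcycle_adj !modnDml -!addnA; case/or4P=> /eqP->; rewrite eqxx ?orbT.
Qed.

(* A Hamiltonian cycle of the square of the path 0 - 1 - ... - (k-1):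
   the even numbers upwards, then the odd ones downwards. *)
Definition zigzag (k i : nat) : nat := if 2 * i < k then 2 * i else 2 * (k - i) - 1.

Lemma zigzag_lt k i : i < k -> zigzag k i < k.
Proof. by rewrite /zigzag; case: ifP => ?; lia. Qed.

Lemma zigzag_inj k i j : i < k -> j < k -> zigzag k i = zigzag k j -> i = j.
Proof. by rewrite /zigzag; case: ifP => ?; case: ifP => ?; lia. Qed.

Lemma zigzag_step k i : 2 < k -> i < k ->
  let c := zigzag k i in let c' := zigzag k (i.+1 %% k) in
  [|| c' == c + 1, c' == c + 2, c == c' + 1 | c == c' + 2].
Proof.
move=> k_gt2 ik /=; have [lt_ik|] := ltnP i.+1 k.
  by rewrite (modn_small lt_ik) /zigzag; case: ifP => ?; case: ifP => ?; lia.
move=> le_ki; have -> : i.+1 = k by lia.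
by rewrite modnn /zigzag; case: ifP => ?; case: ifP => ?; lia.
Qed.

(* For k >= 5 the window v + 3, ..., v + k + 2 of Z_2k misses v - 2 = v + 2k - 2. *)
Definition far_cycle (k v i : nat) : nat := (v + (3 + zigzag k i)) %% (2 * k).

Lemma far_cycle_lt k v i : 0 < k -> far_cycle k v i < 2 * k.
Proof. by move=> k_gt0; rewrite ltn_mod; lia. Qed.

Lemma far_cycle_inj k v i j : 2 < k -> i < k -> j < k ->
  far_cycle k v i = far_cycle k v j -> i = j.
Proof.
move=> k_gt2 ik jk /eqP; have := zigzag_lt k i ik; have := zigzag_lt k j jk => ? ?.
by rewrite eqn_modDl_small ?eqn_add2l => [/eqP/zigzag_inj||]; [apply | lia..].
Qed.

Lemma far_cycle_adj k v i : 2 < k -> i < k ->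
  sqcycle_adj (2 * k) (far_cycle k v i) (far_cycle k v (i.+1 %% k)).
Proof. by move=> k_gt2 ik; rewrite /far_cycle !addnA; apply/sqcycle_adj_shift/zigzag_step. Qed.

Lemma far_cycle_far k v i : 4 < k -> v < 2 * k -> i < k ->
  ~~ sqcycle_cnbhd (2 * k) v (far_cycle k v i).
Proof.
move=> k_gt4 v_lt ik; have := zigzag_lt k i ik.
rewrite /sqcycle_cnbhd /sqcycle_adj /far_cycle; set a := 3 + zigzag k i => a_lt.
have shift_neq b : 0 < b < 2 * k -> (v == (v + b) %% (2 * k)) = false.
  by move=> b_bd; rewrite -{1}(modn_small v_lt) -{1}(addn0 v) eqn_modDl_small //; lia.
by rewrite !modnDml -!addnA eq_sym !shift_neq ?eqn_modDl_small //=; lia.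
Qed.

(* Positions 0, ..., 2k - 1 span the square of the cycle C_2k and the extra
   position 2k is a pendant vertex attached to position 0. *)
Definition gadget_adj (k p q : nat) : bool :=
  [&& p < 2 * k, q < 2 * k & sqcycle_adj (2 * k) p q]
  || [&& p == 0 & q == 2 * k] || [&& p == 2 * k & q == 0].

Lemma gadget_adj_sym k p q : gadget_adj k p q = gadget_adj k q p.
Proof.
rewrite /gadget_adj sqcycle_adj_sym andbCA.
by rewrite [(q == 0) && _]andbC [(q == 2 * k) && _]andbC orbAC.
Qed.

Lemma gadget_adj_irr k p : 1 < k -> ~~ gadget_adj k p p.
Proof.
move=> k_gt1; rewrite /gadget_adj; have [p_lt|] := ltnP p (2 * k).
  by rewrite (negbTE (sqcycle_adj_irr _ _ _ p_lt)) /=; lia.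
by rewrite !andbF /=; lia.
Qed.

Lemma gadget_cnbhd_sub k r : 0 < k -> r < 2 * k + 1 ->
  exists2 v, v < 2 * k &
    forall p, p < 2 * k -> (r == p) || gadget_adj k r p -> sqcycle_cnbhd (2 * k) v p.
Proof.
move=> k_gt0 r_lt; have [r_lt2k | r_ge] := ltnP r (2 * k).
  exists r => // p p_lt; rewrite /gadget_adj /sqcycle_cnbhd p_lt /=.
  by case: sqcycle_adj; rewrite ?orbT //=; lia.
exists 0 => [|p p_lt]; first lia.
rewrite /gadget_adj /sqcycle_cnbhd ltnNge r_ge /=.
by case: sqcycle_adj; rewrite ?orbT //=; lia.
Qed.

Definition block (k x : nat) : nat := (x - 1) %/ (2 * k + 1).
Definition offset (k x : nat) : nat := (x - 1) %% (2 * k + 1).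

Definition hub_adj (k a b : nat) : bool := [&& a == 0, 0 < b & offset k b == 2 * k].

Definition gadget_graph_adj (k a b : nat) : bool :=
  hub_adj k a b || hub_adj k b a
  || [&& 0 < a, 0 < b, block k a == block k b & gadget_adj k (offset k a) (offset k b)].

(* A hub, vertex 0, joined to the pendant positions of m disjoint gadgets;
   position p of gadget u is the vertex 1 + u (2k + 1) + p. *)
Definition gadget_graph (k m : nat) : graph :=
  existT (fun n => {set 'I_n * 'I_n}) (m * (2 * k + 1)).+1
    [set e : 'I_(m * (2 * k + 1)).+1 * 'I_(m * (2 * k + 1)).+1 | gadget_graph_adj k e.1 e.2].

Definition vtx (k m u p : nat) : 'I_(nverts (gadget_graph k m)) :=
  inord (u * (2 * k + 1) + p).+1.

Section GadgetGraph.

Variables k m : nat.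
Local Notation G := (gadget_graph k m).
Local Notation vtx := (vtx k m).

Lemma adj_gadget_graph (x y : 'I_(nverts G)) : adj G x y = gadget_graph_adj k x y.
Proof. by rewrite /adj /edges /= inE. Qed.

Lemma gadget_graph_adj_sym a b : gadget_graph_adj k a b = gadget_graph_adj k b a.
Proof.
by rewrite /gadget_graph_adj gadget_adj_sym (orbC (hub_adj k a b)) (eq_sym (block k a)) andbCA.
Qed.

Lemma simple_gadget_graph : 1 < k -> simple G.
Proof.
move=> k_gt1 x y; rewrite !adj_gadget_graph gadget_graph_adj_sym; split=> //.
rewrite /gadget_graph_adj /hub_adj (negbTE (gadget_adj_irr _ _ k_gt1)) !andbF orbF orbb.
by apply/negP => /and3P[/eqP x0 x_gt0 _]; lia.
Qed.

Lemma vtxE u p : u < m -> p < 2 * k + 1 -> vtx u p = (u * (2 * k + 1) + p).+1 :> nat.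
Proof.
move=> um p_lt; rewrite inordK // ltnS.
have : u.+1 * (2 * k + 1) <= m * (2 * k + 1) by rewrite leq_mul2r um orbT.
by rewrite mulSn; lia.
Qed.

Lemma block_vtx u p : u < m -> p < 2 * k + 1 -> block k (vtx u p) = u.
Proof.
by move=> um p_lt; rewrite /block vtxE // subn1 /= divnMDl ?divn_small ?addn0 //; lia.
Qed.

Lemma offset_vtx u p : u < m -> p < 2 * k + 1 -> offset k (vtx u p) = p.
Proof. by move=> um p_lt; rewrite /offset vtxE // subn1 /= modnMDl modn_small. Qed.

Lemma block_lt (x : 'I_(nverts G)) : 0 < x -> block k x < m.
Proof.
have x_lt : x < (m * (2 * k + 1)).+1 := ltn_ord x.
by move=> x_gt0; rewrite /block ltn_divLR; lia.
Qed.

Lemma offset_lt x : offset k x < 2 * k + 1.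
Proof. by rewrite /offset ltn_mod; lia. Qed.

Lemma vtx_block_offset (x : 'I_(nverts G)) : 0 < x -> x = vtx (block k x) (offset k x).
Proof.
move=> x_gt0; apply: val_inj; rewrite /= vtxE ?block_lt ?offset_lt //.
by rewrite /block /offset -divn_eq subn1 prednK.
Qed.

Lemma gadget_graph_adj_vtx x u p : u < m -> p < 2 * k ->
  gadget_graph_adj k x (vtx u p) = [&& 0 < x, block k x == u & gadget_adj k (offset k x) p].
Proof.
move=> um p_lt; have p_lt' : p < 2 * k + 1 by lia.
by rewrite /gadget_graph_adj /hub_adj block_vtx // offset_vtx // vtxE //= (ltn_eqF p_lt) andbF.
Qed.

Lemma connected_gadget_graph : 0 < k -> connected G.
Proof.
move=> k_gt0; have adjE := adj_gadget_graph.
have hub_connect (x : 'I_(nverts G)) : connect (adj G) ord0 x.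
  have [x0 | x_gt0] := posnP x; first by rewrite (_ : x = ord0) //; exact: val_inj.
  rewrite (vtx_block_offset x x_gt0); have := block_lt x x_gt0; have := offset_lt x.
  move: (block k x) (offset k x) => u p p_lt um.
  have to_pendant : connect (adj G) ord0 (vtx u (2 * k)).
    by apply: connect1; rewrite adjE /gadget_graph_adj /hub_adj offset_vtx ?vtxE ?eqxx //; lia.
  have to_pos0 : connect (adj G) ord0 (vtx u 0).
    apply: connect_trans to_pendant (connect1 _).
    rewrite adjE gadget_graph_adj_vtx ?block_vtx ?offset_vtx ?vtxE //; try lia.
    by rewrite /gadget_adj !eqxx !orbT.
  have [p_lt2k | p_ge] := ltnP p (2 * k); last by rewrite (_ : p = 2 * k) //; lia.
  elim: p p_lt2k {p_lt} => // p IHp p_lt.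
  apply: connect_trans (IHp _) (connect1 _); first lia.
  have p_lt' : p < 2 * k by lia.
  rewrite adjE gadget_graph_adj_vtx ?block_vtx ?offset_vtx ?vtxE ?eqxx //=; try lia.
  by rewrite /gadget_adj /sqcycle_adj p_lt' (modn_small (m := p + 1)) ?addn1 ?eqxx //; lia.
have sym : connect_sym (adj G).
  by apply: sym_connect_sym => x y; rewrite !adjE gadget_graph_adj_sym.
by move=> x y; apply: (connect_trans (y := ord0)); [rewrite sym|]; apply: hub_connect.
Qed.

Lemma closed_nbhd_vtx (D : {set 'I_(nverts G)}) u p : u < m -> p < 2 * k ->
  vtx u p \in closed_nbhd G D ->
  exists2 y, y \in D &
    [&& 0 < y, block k y == u & (offset k y == p) || gadget_adj k (offset k y) p].
Proof.
move=> um p_lt; have p_lt' : p < 2 * k + 1 by lia.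
rewrite inE => /orP[uD | /existsP[y /andP[yD]]].
  by exists (vtx u p); rewrite // block_vtx ?offset_vtx ?vtxE ?eqxx.
rewrite adj_gadget_graph gadget_graph_adj_vtx // => /and3P[y_gt0 yu y_adj].
by exists y; rewrite ?y_gt0 ?yu ?y_adj ?orbT.
Qed.

Lemma has_Ck_outside_gadget (X : {set 'I_(nverts G)}) u v :
  4 < k -> u < m -> v < 2 * k ->
  (forall p, p < 2 * k -> vtx u p \in X -> sqcycle_cnbhd (2 * k) v p) ->
  has_Ck_outside G k X.
Proof.
move=> k_gt4 um v_lt X_near; pose f := [ffun i : 'I_k => vtx u (far_cycle k v i)].
have far_lt i : far_cycle k v i < 2 * k by apply: far_cycle_lt; lia.
have far_lt' i : far_cycle k v i < 2 * k + 1 by have := far_lt i; lia.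
apply/existsP; exists f; apply/andP; split.
  apply/injectiveP => i j; rewrite !ffunE => /(congr1 (offset k \o val)).
  rewrite /= !offset_vtx //.
  by move/far_cycle_inj => /(_ _ (ltn_ord i) (ltn_ord j)) eq_ij; apply/val_inj/eq_ij; lia.
apply/forallP => i; rewrite !ffunE adj_gadget_graph gadget_graph_adj_vtx //.
rewrite block_vtx // offset_vtx // vtxE //.
rewrite /gadget_adj !far_lt far_cycle_adj ?eqxx ?andbT //=; last lia.
by apply/negP => /(X_near _ (far_lt i)); apply/negP/far_cycle_far.
Qed.

Lemma gadget_meets_isolating_twice (D : {set 'I_(nverts G)}) u :
  4 < k -> u < m -> Ck_isolating G k D ->
  1 < #|[set x in D | (0 < x) && (block k x == u)]|.
Proof.
move=> k_gt4 um; set S := [set x in D | _]; apply: contraTT.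
rewrite /Ck_isolating negbK -leqNgt => /card_le1_eqP S_le1.
have [v v_lt S_cov] : exists2 v, v < 2 * k & forall y, y \in S -> forall p, p < 2 * k ->
    (offset k y == p) || gadget_adj k (offset k y) p -> sqcycle_cnbhd (2 * k) v p.
  have [S0 | [y yS]] := set_0Vmem S; first by exists 0 => [|y]; rewrite ?S0 ?inE //; lia.
  have k_gt0 : 0 < k by lia.
  have [v v_lt y_cov] := gadget_cnbhd_sub _ _ k_gt0 (offset_lt y).
  by exists v => // y' y'S; rewrite (S_le1 _ _ yS y'S).
apply: (has_Ck_outside_gadget _ _ _ k_gt4 um v_lt) => p p_lt /closed_nbhd_vtx.
case=> // y yD /and3P[y_gt0 yu y_cov]; apply: (S_cov y) => //.
by rewrite inE yD y_gt0 yu.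
Qed.

Lemma iota_gadget_graph_ge : 4 < k -> 2 * m <= iota_Ck G k.
Proof.
move=> k_gt4; apply: iota_Ck_ge => [|D D_iso]; first by rewrite /=; nia.
apply: leq_trans _ (sum_card_fibres_le _ D (fun x => 0 < x) (block k \o val) m).
have -> : 2 * m = \sum_(u < m) 2 by rewrite sum_nat_const card_ord mulnC.
apply: leq_sum => u _.
exact: gadget_meets_isolating_twice.
Qed.

End GadgetGraph.

Theorem proposition2 (k : nat) (c : rat) :
  (5 <= k)%N -> (0 < c)%R ->
  finite_graphs (calG_gt k c) ->
  ~ finite_graphs (calG_star k c) ->
  (2%:R / (2 * k + 1)%:R <= c)%R.
Proof.
move=> k_ge5 c_gt0 /finite_graphs_bounded[M le_M] _.
have B_gt0 : (0 < (2 * k + 1)%:R :> rat)%R by rewrite ltr0n addn1.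
rewrite leNgt; apply/negP; rewrite ltr_pdivlMr // => lt_c.
have [N lt_N] := affine_lt_eventually _ _ _ _ (ltW c_gt0) lt_c.
pose m := maxn N M.+1.
have G_in : in_calG (gadget_graph k m).
  by split=> //; split; [apply: simple_gadget_graph | apply: connected_gadget_graph]; lia.
have : calG_gt k c (gadget_graph k m).
  apply: calG_gt_of_lt => //; rewrite /= -addn1 natrD natrM.
  apply: lt_le_trans (lt_N m (leq_maxl _ _)) _.
  by rewrite -natrM ler_nat mulnC iota_gadget_graph_ge.
by move/le_M; rewrite /= /m; lia.
Qed.
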